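(* Let $n,N\ge1$ and positive integers $r_1,\dots,r_N,r$ with $r_i\le r\le\lfloor(n-1)/2\rfloor$. Consider either (a) $d=n$, $p=r_i+1$, $q=n-r_i$ for some $i$, and $\mathcal{A}(y)=\mathcal{H}_{r_i+1}(y)$; or (b) $d=Nn$, $p=r+1$, $q=N(n-r)$, $\mathcal{A}(y)=[\mathcal{H}_{r+1}(y_1)\cdots\mathcal{H}_{r+1}(y_N)]$ for $y=(y_1^\top,\dots,y_N^\top)^\top$. Fix $\hat y\in\mathbb{R}^d$ and define, for $R\in\mathbb{R}^{1\times p}$, $$\Psi(R)=\inf_{y\in\mathbb{R}^d}\Big\{\tfrac12\|y-\hat y\|^2:\ R\mathcal{A}(y)=0\Big\}.$$ Then $\Psi$ is smooth on $\mathbb{R}^{1\times p}\setminus\{0\}$.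
   Context: For $x\in\mathbb{R}^n$ and $1\le l\le n$, $\mathcal{H}_l(x)\in\mathbb{R}^{l\times(n-l+1)}$ is the Hankel matrix with $(i,j)$ entry $x(i+j-1)$. *)

From HB Require Import structures.
From mathcomp Require Import all_boot all_order all_algebra.
From mathcomp Require Import all_classical all_reals all_analysis.
Set Implicit Arguments. Unset Strict Implicit. Unset Printing Implicit Defensive.
Import Order.TTheory GRing.Theory Num.Theory.
Import numFieldNormedType.Exports.
Local Open Scope classical_set_scope.
Local Open Scope ring_scope.

Section Defs.
Variable R : realType.

(* 0-indexed access x(k) of a vector x in R^n (k < n); 0 out of range (never used). *)
Definition vnth (n : nat) (x : 'rV[R]_n) (k : nat) : R :=
  if @insub nat (fun k => k < n)%N 'I_n k is Some j then x 0 j else 0.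

(* Hankel matrix H_l(x) in R^{l x (n-l+1)}, (i,j) entry x(i+j-1) (1-indexed),
   i.e. x(i+j) with 0-indexed i, j. *)
Definition hankel_entry (n : nat) (x : 'rV[R]_n) (i j : nat) : R := vnth x (i + j).

Definition hankel (n l : nat) (x : 'rV[R]_n) : 'M[R]_(l, n - l + 1) :=
  \matrix_(i < l, j < n - l + 1) hankel_entry x i j.

(* k-th block y_k (0-indexed) of y = (y_1^T, ..., y_N^T)^T in R^{N n} *)
Definition vblock (N n : nat) (y : 'rV[R]_(N * n)) (k : nat) : 'rV[R]_n :=
  \row_(t < n) vnth y (k * n + t).

(* [H_{r+1}(y_1) ... H_{r+1}(y_N)] in R^{(r+1) x N(n-r)} : column j lies in
   block j / (n-r), at column j mod (n-r) of that block
   (entry (i, c) of H_{r+1}(y_k) is hankel_entry y_k i c). *)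
Definition hankel_cat (N n r : nat) (y : 'rV[R]_(N * n)) : 'M[R]_(r.+1, N * (n - r)) :=
  \matrix_(i < r.+1, j < N * (n - r))
     hankel_entry (vblock y (j %/ (n - r))) i (j %% (n - r)).

Definition Psi (d p q : nat) (A : 'rV[R]_d -> 'M[R]_(p, q)) (yhat : 'rV[R]_d)
  (Rv : 'rV[R]_p) : R :=
  inf [set (2^-1 * \sum_(k < d) (y 0 k - yhat 0 k) ^+ 2) | y in
        [set y : 'rV[R]_d | Rv *m A y = 0]].

Fixpoint iderive (p : nat) (f : 'rV[R]_p -> R) (vs : seq 'rV[R]_p) : 'rV[R]_p -> R :=
  match vs with
  | [::] => f
  | v :: vs' => fun x => 'D_v (iderive f vs') x
  end.

Definition smooth_on (p : nat) (U : set 'rV[R]_p) (f : 'rV[R]_p -> R) : Prop :=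
  forall vs : seq 'rV[R]_p,
    (forall x, U x -> forall v, derivable (iderive f vs) x v) /\
    (forall x, U x -> {for x, continuous (iderive f vs)}).

End Defs.

From HB Require Import structures.
From mathcomp Require Import all_boot all_order all_algebra.
From mathcomp Require Import all_classical all_reals all_analysis.
From mathcomp Require Import ring zify.
Import Order.TTheory GRing.Theory Num.Theory.
Import numFieldNormedType.Exports.
Local Open Scope classical_set_scope.
Local Open Scope ring_scope.
Set Implicit Arguments. Unset Strict Implicit.

(* For fixed R the constraint R A(y) = 0 is linear in y: R A(y) = y M(R)^T,
   where the rows of M(R) are copies of R placed at pairwise distinct offsets
   (consecutive offsets for one Hankel matrix, one run per block for the
   concatenation).  If R <> 0 and c <> 0, then c M(R) <> 0: in the column where
   the first nonzero coefficient of R meets the row of smallest offset with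
   c_j <> 0, a single term survives.  Hence M = M(R) has full row rank, the Gram
   matrix M M^T is invertible, and Psi(R) is half the squared norm of the
   orthogonal projection yhat M^T (M M^T)^-1 M of yhat onto the row space of M.
   This is a rational function of the entries of R whose denominator det (M M^T)
   does not vanish on R <> 0, and such functions are stable under directional
   derivatives, hence smooth. *)


Section RationalFunctions.
Variables (R : realType) (p : nat) (U : set 'rV[R]_p).

Inductive rational_on : ('rV[R]_p -> R) -> Prop :=
| rational_cst c : rational_on (fun _ => c)
| rational_coord j : rational_on (fun x => x 0 j)
| rational_add f g : rational_on f -> rational_on g -> rational_on (fun x => f x + g x)
| rational_mul f g : rational_on f -> rational_on g -> rational_on (fun x => f x * g x)
| rational_inv f : rational_on f -> (forall x, U x -> f x != 0) ->
    rational_on (fun x => (f x)^-1)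
(* Agreement on U suffices, since 'D_v of a product or quotient is only
   computed at points of U. *)
| rational_eq f g : rational_on f -> (forall x, U x -> f x = g x) -> rational_on g.

Lemma rational_on_sum (I : Type) (s : seq I) (F : I -> 'rV[R]_p -> R) :
  (forall i, rational_on (F i)) -> rational_on (fun x => \sum_(i <- s) F i x).
Proof.
move=> rF; elim: s => [|i s IH].
  by apply: (rational_eq (rational_cst 0)) => x _; rewrite big_nil.
by apply: (rational_eq (rational_add (rF i) IH)) => x _; rewrite big_cons.
Qed.

Lemma rational_on_prod (I : Type) (s : seq I) (F : I -> 'rV[R]_p -> R) :
  (forall i, rational_on (F i)) -> rational_on (fun x => \prod_(i <- s) F i x).
Proof.
move=> rF; elim: s => [|i s IH].
  by apply: (rational_eq (rational_cst 1)) => x _; rewrite big_nil.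
by apply: (rational_eq (rational_mul (rF i) IH)) => x _; rewrite big_cons.
Qed.

Hypothesis U_open : open U.

Let near_U x : U x -> \forall y \near x, U y.
Proof. by move=> Ux; apply: open_nbhs_nbhs. Qed.

Lemma rational_on_derivable f : rational_on f ->
  forall x, U x -> forall v, derivable f x v.
Proof.
elim=> {f} [c|j|f g _ df _ dg|f g _ df _ dg|f _ df f_neq0|f g _ df fg] x Ux v.
- exact: derivable_cst.
- exact: (derivable_mxP _ _ _).1 (@derivable_id _ _ x v) 0 j.
- exact: derivableD (df x Ux v) (dg x Ux v).
- exact: derivableM (df x Ux v) (dg x Ux v).
- exact: derivableV (f_neq0 x Ux) (df x Ux v).
- by apply: near_eq_derivable (df x Ux v); apply: filterS (near_U Ux).
Qed.

Lemma rational_on_continuous f : rational_on f ->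
  forall x, U x -> {for x, continuous f}.
Proof.
elim=> {f} [c|j|f g _ cf _ cg|f g _ cf _ cg|f _ cf f_neq0|f g _ cf fg] x Ux.
- exact: cst_continuous.
- exact: coord_continuous.
- exact: continuousD (cf x Ux) (cg x Ux).
- exact: continuousM (cf x Ux) (cg x Ux).
- exact: continuousV (f_neq0 x Ux) (cf x Ux).
- have f_near_g : {near x, f =1 g} by apply: filterS (near_U Ux) => y /fg.
  rewrite /prop_for /continuous_at -(fg x Ux).
  exact: cvg_trans (near_eq_cvg f_near_g) (cf x Ux).
Qed.

Lemma rational_on_derive f v : rational_on f -> rational_on (fun x => 'D_v f x).
Proof.
elim=> {f} [c|j|f g rf Df rg Dg|f g rf Df rg Dg|f rf Df f_neq0|f g rf Df fg].
- by apply: (rational_eq (rational_cst 0)) => x _; rewrite derive_cst.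
- apply: (rational_eq (rational_cst (v 0 j))) => x _.
  have := derive_mx (@derivable_id _ _ x v); rewrite derive_id => Dv.
  by rewrite {1}Dv mxE.
- apply: (rational_eq (rational_add Df Dg)) => x Ux.
  by rewrite deriveD //; apply: rational_on_derivable.
- apply: (rational_eq (rational_add (rational_mul rf Dg) (rational_mul rg Df))) => x Ux.
  by rewrite deriveM //; apply: rational_on_derivable.
- have rfV := rational_inv rf f_neq0.
  apply: (rational_eq (rational_mul (rational_mul (rational_mul
    (rational_cst (-1)) rfV) rfV) Df)) => x Ux.
  have fx_neq0 := f_neq0 x Ux.
  have dfx : derivable f x v by exact: rational_on_derivable.
  by rewrite deriveV //= expr2 invfM mulN1r mulNr.
- apply: (rational_eq Df) => x Ux; apply: near_eq_derive.
  exact: filterS (near_U Ux).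
Qed.

Lemma rational_on_smooth f : rational_on f -> smooth_on U f.
Proof.
move=> rf vs; have rfvs : rational_on (iderive f vs).
  by elim: vs => //= v vs; exact: rational_on_derive.
by split; [exact: rational_on_derivable | exact: rational_on_continuous].
Qed.

End RationalFunctions.

Section RationalMatrices.
Variables (R : realType) (p : nat) (U : set 'rV[R]_p).

Definition mx_rational_on m n (F : 'rV[R]_p -> 'M[R]_(m, n)) :=
  forall i j, rational_on U (fun x => F x i j).

Lemma mx_rational_on_cst m n (C : 'M[R]_(m, n)) : mx_rational_on (fun _ => C).
Proof. by move=> i j; exact: rational_cst. Qed.

Lemma mx_rational_on_tr m n (F : 'rV[R]_p -> 'M[R]_(m, n)) :
  mx_rational_on F -> mx_rational_on (fun x => (F x)^T).
Proof. by move=> rF i j; apply: (rational_eq (rF j i)) => x _; rewrite mxE. Qed.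

Lemma mx_rational_on_mul m n k
    (F : 'rV[R]_p -> 'M[R]_(m, n)) (G : 'rV[R]_p -> 'M[R]_(n, k)) :
  mx_rational_on F -> mx_rational_on G -> mx_rational_on (fun x => F x *m G x).
Proof.
move=> rF rG i j; apply: (rational_eq (rational_on_sum (index_enum 'I_n) _)).
  by move=> l; exact: (rational_mul (rF i l) (rG l j)).
by move=> x _; rewrite mxE.
Qed.

Lemma rational_on_det n (F : 'rV[R]_p -> 'M[R]_n) :
  mx_rational_on F -> rational_on U (fun x => \det (F x)).
Proof.
move=> rF; rewrite /determinant; apply: rational_on_sum => s.
by apply: rational_mul; [exact: rational_cst | apply: rational_on_prod => i; exact: rF].
Qed.

Lemma mx_rational_on_adj n (F : 'rV[R]_p -> 'M[R]_n) :
  mx_rational_on F -> mx_rational_on (fun x => \adj (F x)).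
Proof.
move=> rF i j; have rminor : rational_on U (fun x => \det (row' j (col' i (F x)))).
  by apply: rational_on_det => a b; apply: (rational_eq (rF _ _)) => x _; rewrite !mxE.
by apply: (rational_eq (rational_mul (rational_cst _ _) rminor)) => x _; rewrite mxE.
Qed.

Lemma mx_rational_on_inv n (F : 'rV[R]_p -> 'M[R]_n) :
  mx_rational_on F -> (forall x, U x -> F x \in unitmx) ->
  mx_rational_on (fun x => invmx (F x)).
Proof.
move=> rF F_unit i j; have det_neq0 x : U x -> \det (F x) != 0.
  by move=> Ux; rewrite -unitfE -unitmxE F_unit.
apply: (rational_eq (rational_mul (rational_inv (rational_on_det rF) det_neq0)
  (mx_rational_on_adj rF i j))) => x Ux.
by rewrite /invmx (F_unit x Ux) [RHS]mxE.
Qed.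

End RationalMatrices.

Lemma open_neq0 (R : realType) m n : open [set A : 'M[R]_(m, n) | A != 0].
Proof.
have -> : [set A : 'M[R]_(m, n) | A != 0] = ~` [set 0].
  by apply/seteqP; split=> A /=; move/eqP.
exact/closed_openC/accessible_closed_set1/hausdorff_accessible/norm_hausdorff.
Qed.

Section LeastSquares.
Variables (R : realType) (d : nat).

Definition sqnorm (a : 'rV[R]_d) : R := \sum_k a 0 k ^+ 2.

Lemma sqnormE a : sqnorm a = (a *m a^T) 0 0.
Proof. by rewrite mxE; apply: eq_bigr => k _; rewrite mxE expr2. Qed.

Lemma sqnorm_ge0 a : 0 <= sqnorm a.
Proof. by apply: sumr_ge0 => k _; exact: sqr_ge0. Qed.

Lemma sqnorm_eq0 a : sqnorm a = 0 -> a = 0.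
Proof.
move/psumr_eq0P => a0; apply/rowP => k; rewrite mxE; apply/eqP.
by rewrite -sqrf_eq0 a0 // => i _; exact: sqr_ge0.
Qed.

Lemma sqnormD_orth u w : u *m w^T = 0 -> sqnorm (u + w) = sqnorm u + sqnorm w.
Proof.
move=> uw0; have wu0 : w *m u^T = 0 by rewrite -[w]trmxK -trmx_mul uw0 trmx0.
by rewrite !sqnormE raddfD /= mulmxDl !mulmxDr uw0 wu0 add0r addr0 mxE.
Qed.

Lemma sqnormN a : sqnorm (- a) = sqnorm a.
Proof. by apply: eq_bigr => k _; rewrite mxE sqrrN. Qed.

Lemma gram_unitmx q (M : 'M[R]_(q, d)) : row_free M -> M *m M^T \in unitmx.
Proof.
move=> M_free; rewrite -row_free_unit; apply: inj_row_free => c cG0.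
have : sqnorm (c *m M) = 0.
  by rewrite sqnormE trmx_mul mulmxA -(mulmxA c) cG0 mul0mx mxE.
by move/sqnorm_eq0 => cM0; apply: (row_free_inj M_free); rewrite /= cM0 mul0mx.
Qed.

Lemma Psi_least_squares p q (A : 'rV[R]_d -> 'M[R]_(p, q)) (M : 'M[R]_(q, d))
    (Rv : 'rV[R]_p) (yhat : 'rV[R]_d) :
  (forall y, Rv *m A y = y *m M^T) -> row_free M ->
  Psi A yhat Rv = 2^-1 * sqnorm (yhat *m M^T *m invmx (M *m M^T) *m M).
Proof.
move=> AE M_free; set w := _ *m M; set z := yhat - w.
have z_ker : z *m M^T = 0.
  by rewrite mulmxBl /w -(mulmxA _ M) mulmxKV ?gram_unitmx // subrr.
have dist y : y *m M^T = 0 -> sqnorm (y - yhat) = sqnorm (z - y) + sqnorm w.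
  move=> y_ker; rewrite -sqnormN opprB -sqnormD_orth; first by rewrite /z addrAC subrK.
  by rewrite /w trmx_mul mulmxA mulmxBl z_ker y_ker subrr mul0mx.
pose E := [set 2^-1 * \sum_(k < d) (y 0 k - yhat 0 k) ^+ 2
  | y in [set y | Rv *m A y = 0]].
have sumE (y : 'rV[R]_d) : \sum_(k < d) (y 0 k - yhat 0 k) ^+ 2 = sqnorm (y - yhat).
  by apply: eq_bigr => k _; rewrite !mxE.
have Ew : E (2^-1 * sqnorm w).
  by exists z; [rewrite /= AE | rewrite sumE /z addrAC subrr add0r sqnormN].
have w_lb : lbound E (2^-1 * sqnorm w).
  move=> _ [y /= y_ker <-]; rewrite AE in y_ker.
  by rewrite sumE dist // ler_pM2l ?invr_gt0 ?ltr0n // lerDr sqnorm_ge0.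
apply/le_anti/andP; split; first by apply: ge_inf Ew; exists (2^-1 * sqnorm w).
by apply: lb_le_inf w_lb; exists (2^-1 * sqnorm w).
Qed.

End LeastSquares.

Lemma rational_on_sqnorm (R : realType) p d (U : set 'rV[R]_p)
    (F : 'rV[R]_p -> 'rV[R]_d) :
  mx_rational_on U F -> rational_on U (fun x => sqnorm (F x)).
Proof.
move=> rF; apply: rational_on_sum => k.
by apply: (rational_eq (rational_mul (rF 0 k) (rF 0 k))) => x _; rewrite expr2.
Qed.

Lemma smooth_Psi_linear_constraint (R : realType) p d q
    (A : 'rV[R]_d -> 'M[R]_(p, q)) (M : 'rV[R]_p -> 'M[R]_(q, d)) (yhat : 'rV[R]_d) :
  (forall Rv y, Rv *m A y = y *m (M Rv)^T) ->
  (forall Rv, Rv != 0 -> row_free (M Rv)) ->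
  mx_rational_on [set Rv | Rv != 0] M ->
  smooth_on [set Rv | Rv != 0] (Psi A yhat).
Proof.
move=> AE M_free rM; apply: rational_on_smooth; first exact: open_neq0.
have rMT := mx_rational_on_tr rM.
have rW : mx_rational_on [set Rv | Rv != 0]
    (fun Rv => yhat *m (M Rv)^T *m invmx (M Rv *m (M Rv)^T) *m M Rv).
  apply: (mx_rational_on_mul _ rM); apply: mx_rational_on_mul.
    exact: (mx_rational_on_mul (mx_rational_on_cst _ _) rMT).
  apply: mx_rational_on_inv; first exact: (mx_rational_on_mul rM rMT).
  by move=> Rv /M_free; exact: gram_unitmx.
apply: (rational_eq (rational_mul (rational_cst _ 2^-1) (rational_on_sqnorm rW))).
by move=> Rv /M_free M_free_Rv; rewrite (Psi_least_squares yhat (AE Rv)).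
Qed.

Section ShiftedRows.
Variables (R : realType) (s d q : nat) (off : 'I_q -> nat).
Implicit Types (Rv : 'rV[R]_s.+1) (y : 'rV[R]_d).

Definition shift_mx (Rv : 'rV[R]_s.+1) : 'M[R]_(q, d) :=
  \matrix_(j, k) \sum_(i < s.+1) ((off j + i)%N == k)%:R * Rv 0 i.

Lemma mx_rational_on_shift_mx U : mx_rational_on U shift_mx.
Proof.
move=> j k; apply: (rational_eq (rational_on_sum _ _)); last by move=> Rv _; rewrite mxE.
by move=> i; apply: rational_mul; [exact: rational_cst | exact: rational_coord].
Qed.

Lemma shift_mx_pivot Rv (j : 'I_q) (i : 'I_s.+1) (k : 'I_d) :
  (off j + i)%N = k -> shift_mx Rv j k = Rv 0 i.
Proof.
move=> ik; rewrite mxE (bigD1 i) //= ik eqxx mul1r big1 ?addr0 // => i' /negbTE i'i.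
by rewrite -ik eqn_add2l val_eqE i'i mul0r.
Qed.

Lemma shift_mx_eq0 Rv (j : 'I_q) (k : 'I_d) :
  (forall i : 'I_s.+1, (off j + i)%N = k -> Rv 0 i = 0) -> shift_mx Rv j k = 0.
Proof.
move=> Rv0; rewrite mxE big1 // => i _.
by have [/Rv0 ->|] := eqVneq (off j + i)%N k; rewrite ?mulr0 ?mul0r.
Qed.

Lemma sum_delta_vnth y (t : nat) :
  \sum_(k < d) ((k : nat) == t)%:R * y 0 k = vnth y t.
Proof.
rewrite /vnth; case: insubP => [k0 _ <- | t_out].
  rewrite (bigD1 k0) //= eqxx mul1r big1 ?addr0 // => k /negbTE k_neq.
  by rewrite val_eqE k_neq mul0r.
apply: big1 => k _; case: eqP => [kt | _]; last by rewrite mul0r.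
by move: t_out; rewrite -kt ltn_ord.
Qed.

Lemma mulmx_tr_shift_mx Rv y (j : 'I_q) :
  (y *m (shift_mx Rv)^T) 0 j = \sum_(i < s.+1) Rv 0 i * vnth y (off j + i).
Proof.
rewrite mxE; under eq_bigr => k _ do rewrite !mxE big_distrr /=.
rewrite exchange_big /=; apply: eq_bigr => i _.
rewrite -sum_delta_vnth big_distrr /=; apply: eq_bigr => k _.
by rewrite eq_sym; ring.
Qed.

Lemma row_free_shift_mx Rv : injective off -> (forall j, off j + s < d)%N ->
  Rv != 0 -> row_free (shift_mx Rv).
Proof.
move=> off_inj off_lt Rv_neq0; apply: inj_row_free => c cM0.
apply/rowP => j1; rewrite mxE; apply/eqP; apply: contraT => cj1.
have [i1 Ri1] : exists i1, Rv 0 i1 != 0.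
  apply/existsP; apply: contraNT Rv_neq0 => /existsPn Rv0.
  by apply/eqP/rowP => i; rewrite mxE; apply/eqP/negPn/Rv0.
case: (@arg_minnP _ i1 (fun i => Rv 0 i != 0) val Ri1) => m Rm m_min.
case: (@arg_minnP _ j1 (fun j => c 0 j != 0) off cj1) => j0 cj0 j0_min.
have k_lt : (off j0 + m < d)%N.
  by apply: leq_ltn_trans (off_lt j0); rewrite leq_add2l -ltnS.
pose k := Ordinal k_lt.
have : (c *m shift_mx Rv) 0 k = c 0 j0 * Rv 0 m.
  rewrite mxE (bigD1 j0) //= (shift_mx_pivot Rv (i := m)) // big1 ?addr0 // => j j_neq.
  have [->|cj] := eqVneq (c 0 j) 0; first by rewrite mul0r.
  have off_gt : (off j0 < off j)%N.
    by rewrite ltn_neqAle j0_min // andbT; apply: contra j_neq => /eqP/off_inj ->.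
  rewrite shift_mx_eq0 ?mulr0 // => i ik; apply/eqP; apply: contraT => /m_min.
  by move: ik off_gt; rewrite /k /=; lia.
by rewrite cM0 mxE => /esym/eqP; rewrite mulf_eq0 (negbTE cj0) (negbTE Rm).
Qed.

End ShiftedRows.

Lemma hankel_mulmx (R : realType) n s (Rv : 'rV[R]_s.+1) (y : 'rV[R]_n) :
  Rv *m hankel s.+1 y = y *m (shift_mx n (@nat_of_ord _) Rv)^T.
Proof.
apply/rowP => j; rewrite mulmx_tr_shift_mx mxE; apply: eq_bigr => i _.
by rewrite mxE /hankel_entry addnC.
Qed.

Definition block_offset (n k j : nat) : nat := j %/ k * n + j %% k.

Lemma block_offset_inj n k : (0 < k <= n)%N -> injective (block_offset n k).
Proof.
case/andP=> k_gt0 k_le_n j1 j2; rewrite /block_offset => eq_off.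
have n_gt0 : (0 < n)%N by apply: leq_trans k_le_n.
have [c1 c2] : (j1 %% k < n /\ j2 %% k < n)%N.
  by split; apply: leq_trans k_le_n; rewrite ltn_pmod.
have eq_div : (j1 %/ k = j2 %/ k)%N.
  have := congr1 (divn^~ n) eq_off.
  by rewrite /= !divnMDl // (divn_small c1) (divn_small c2) !addn0.
have eq_mod : (j1 %% k = j2 %% k)%N.
  have := congr1 (modn^~ n) eq_off.
  by rewrite /= !modnMDl (modn_small c1) (modn_small c2).
by rewrite (divn_eq j1 k) (divn_eq j2 k) eq_div eq_mod.
Qed.

Lemma block_offset_lt N n r j : (j < N * (n - r))%N ->
  (block_offset n (n - r) j + r < N * n)%N.
Proof.
move=> j_lt; have /andP[_ k_gt0] : (0 < N)%N && (0 < n - r)%N.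
  by rewrite -muln_gt0; apply: leq_ltn_trans j_lt.
have b_lt : (j %/ (n - r) < N)%N by rewrite ltn_divLR.
have : ((j %/ (n - r)).+1 * n <= N * n)%N by rewrite leq_mul2r b_lt orbT.
move: (ltn_pmod j k_gt0); rewrite /block_offset mulSn.
by generalize (j %/ (n - r))%N (j %% (n - r))%N; lia.
Qed.

Lemma vnth_row (R : realType) n (f : nat -> R) k : (k < n)%N ->
  vnth (\row_(t < n) f t) k = f k.
Proof. by move=> k_lt; rewrite /vnth insubT mxE. Qed.

Lemma hankel_cat_mulmx (R : realType) N n r (Rv : 'rV[R]_r.+1) (y : 'rV[R]_(N * n)) :
  Rv *m hankel_cat r y =
  y *m (shift_mx (N * n) (block_offset n (n - r) \o @nat_of_ord _) Rv)^T.
Proof.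
apply/rowP => j; rewrite mulmx_tr_shift_mx mxE; apply: eq_bigr => i _.
have j_mod : (j %% (n - r) < n - r)%N.
  rewrite ltn_pmod //; have := leq_ltn_trans (leq0n j) (ltn_ord j).
  by rewrite muln_gt0 => /andP[].
rewrite mxE /hankel_entry /vblock.
rewrite (@vnth_row R n (fun t => vnth y (j %/ (n - r) * n + t)%N)).
  by rewrite /= /block_offset (addnC i) addnA.
by move: j_mod (ltn_ord i); generalize (j %% (n - r))%N; lia.
Qed.

Theorem theorem4p2 (R : realType) (n N : nat) (rs : 'I_N -> nat) (r : nat) :
  (1 <= n)%N -> (1 <= N)%N ->
  (forall i, 0 < rs i)%N -> (0 < r)%N ->
  (forall i, rs i <= r)%N -> (r <= (n - 1) %/ 2)%N ->
  (* case (a): d = n, p = r_i + 1, q = n - r_i, A = H_{r_i+1} *)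
  (forall (i : 'I_N) (yhat : 'rV[R]_n),
     smooth_on [set Rv : 'rV[R]_(rs i).+1 | Rv != 0]
               (Psi (@hankel R n (rs i).+1) yhat))
  /\
  (* case (b): d = N n, p = r + 1, q = N (n - r), A = [H_{r+1}(y_1) ... H_{r+1}(y_N)] *)
  (forall yhat : 'rV[R]_(N * n),
     smooth_on [set Rv : 'rV[R]_r.+1 | Rv != 0]
               (Psi (@hankel_cat R N n r) yhat)).
Proof.
move=> n_gt0 _ _ _ rs_le_r r_le.
have r_lt_n : (r < n)%N by apply: (leq_ltn_trans r_le); rewrite ltn_divLR //; lia.
split=> [i yhat | yhat].
- apply: (smooth_Psi_linear_constraint (M := shift_mx n (@nat_of_ord _))).
  + exact: hankel_mulmx.
  + move=> Rv Rv_neq0; apply: row_free_shift_mx Rv_neq0; first exact: val_inj.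
    by move=> j; have := ltn_ord j; have := rs_le_r i; lia.
  + exact: mx_rational_on_shift_mx.
- apply: (smooth_Psi_linear_constraint
    (M := shift_mx (N * n) (block_offset n (n - r) \o @nat_of_ord _))).
  + exact: hankel_cat_mulmx.
  + move=> Rv Rv_neq0; apply: row_free_shift_mx Rv_neq0 => [j1 j2 | j].
      move/block_offset_inj=> eq_j; apply/val_inj/eq_j.
      by rewrite subn_gt0 r_lt_n leq_subr.
    exact: block_offset_lt (ltn_ord j).
  + exact: mx_rational_on_shift_mx.
Qed.
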